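(* Let $G$ be a group of order $n\ge 2$, let $g\in G$ be a non-identity element, and let $m\ge 3$ be an odd integer. Let $\Gamma$ be the digraph with vertex set $G\times G\times\mathbb{Z}_m$ in which $(x,y,i)\to(u,v,j)$ if and only if at least one of the following holds: (1) $x=u$, $i=j$ and $y\neq v$; (2) $y=v$, $i=j$ and $x\neq u$; (3) $u=xy$ and $j\in\{i+1,\dots,i+\tfrac{m-1}{2}\}$ (indices mod $m$); (4) $v=xy$ and $j\in\{i-\tfrac{m-1}{2},\dots,i-1\}$ (indices mod $m$); (5) $u=xyg$ and $j\in\{i+1,\dots,i+\tfrac{m-1}{2}\}$ (indices mod $m$); (6) $v=xyg$ and $j\in\{i-\tfrac{m-1}{2},\dots,i-1\}$ (indices mod $m$). Then $\Gamma$ is a directed strongly regular graph with parameters $(v,k,t,\lambda,\mu)=(mn^2,\ 2mn-2,\ 2n+4m-6,\ n+4m-6,\ 4m-2)$.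
   Context: A digraph here has no loops and no multiple arcs; its adjacency matrix $A$ has $A_{xy}=1$ iff $x\to y$. A directed strongly regular graph with parameters $(v,k,t,\lambda,\mu)$ is a digraph on $v$ vertices whose adjacency matrix $A$ satisfies $A^2=tI+\lambda A+\mu(J-I-A)$ and $AJ=JA=kJ$, where $I$ is the identity and $J$ the all-ones matrix. (The paper phrases the hypothesis on $g$ as ''non-identity, non-idempotent'', which in a group is the same as $g\ne$ identity.) *)

From HB Require Import structures.
From mathcomp Require Import all_boot all_order all_algebra all_fingroup.
Set Implicit Arguments. Unset Strict Implicit. Unset Printing Implicit Defensive.
Import GRing.Theory.

Section Mx.
Local Open Scope ring_scope.

Definition adjmx (T : finType) (e : rel T) : 'M[int]_#|T| :=
  \matrix_(i, j) ((e (enum_val i) (enum_val j))%:R : int).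

Definition Jmx (n : nat) : 'M[int]_n := const_mx 1.

(* A digraph (no loops; no multiple arcs, automatic for a relation) on T is a
   directed strongly regular graph with parameters (v,k,t,lambda,mu):
   A^2 = tI + lambda A + mu (J - I - A), AJ = JA = kJ, |V| = v. *)
Definition is_dsrg (T : finType) (e : rel T) (v k t lam mu : nat) : Prop :=
  let A := adjmx e in
  let J := Jmx #|T| in
  [/\ irreflexive e,
      #|T| = v,
      A *m J = k%:R *: J,
      J *m A = k%:R *: J &
      A *m A = (t%:R : int)%:M + lam%:R *: A + mu%:R *: (J - 1%:M - A)].
End Mx.

Definition fwd (m : nat) (i j : 'I_m) : bool :=
  [exists d : 'I_m, (1 <= d <= (m - 1) %/ 2) && (val j == (val i + d) %% m)].

Definition Gamma (G : finGroupType) (g : G) (m : nat) : rel (G * G * 'I_m) :=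
  fun a b =>
    let: (x, y, i) := a in
    let: (u, v, j) := b in
    [|| [&& x == u, i == j & y != v],
        [&& y == v, i == j & x != u],
        (u == (x * y)%g) && fwd i j,
        (v == (x * y)%g) && fwd j i,
        (u == (x * y * g)%g) && fwd i j
      | (v == (x * y * g)%g) && fwd j i].
Arguments Gamma {G} g m _ _.

(* The adjacency matrix of Gamma is A = I (x) R + F (x) S1 + F^T (x) S2, where
   F is the circulant tournament i -> {i+1, ..., i+(m-1)/2} on Z_m (m odd
   gives F + F^T = J - I), R is the rook graph K_n [] K_n on G x G, and
   S1 (resp. S2) sends (x, y) to the pairs whose first (resp. second)
   coordinate lies in the coset xyD, D = {1, g}.  Expanding A^2 gives nine
   Kronecker products; each G x G factor is a count done by translation in G
   (every element lies in exactly |D| = 2 left cosets cD), and the layer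
   factors only use F + F^T = J - I.  So the result holds for any tournament
   on the layers and any two-element subset D of G. *)

From mathcomp Require Import all_boot all_order all_algebra all_fingroup.
From mathcomp Require Import zify ring.
Import GRing.Theory Num.Theory.
Set Implicit Arguments. Unset Strict Implicit.

Section IndicatorSums.
Local Open Scope ring_scope.
Variable T : finType.

Lemma sumr_nat_card (P : pred T) : \sum_x (P x)%:R = #|P|%:R :> int.
Proof.
rewrite -sum1_card natr_sum [RHS]big_mkcond.
by apply: eq_bigr => x _; rewrite unfold_in; case: (P x).
Qed.

Lemma sumr_constE (c : int) : \sum_(l : T) c = #|T|%:R * c.
Proof. by rewrite sumr_const mulr_natl. Qed.

Lemma sum_delta_mull (i : T) (F : T -> int) : \sum_l (i == l)%:R * F l = F i.
Proof.
rewrite (bigD1 i) //= eqxx mul1r big1 ?addr0 // => l.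
by rewrite eq_sym => /negbTE ->; rewrite mul0r.
Qed.

Lemma sum_delta_mulr (j : T) (F : T -> int) : \sum_l F l * (l == j)%:R = F j.
Proof.
by rewrite -[RHS](sum_delta_mull j); apply: eq_bigr => l _; rewrite mulrC eq_sym.
Qed.

Lemma sum_delta (i : T) : \sum_l (i == l)%:R = 1 :> int.
Proof.
by rewrite -[RHS](sum_delta_mull i (fun=> 1)); apply: eq_bigr => l _; rewrite mulr1.
Qed.

End IndicatorSums.

Section KroneckerSums.
Local Open Scope ring_scope.
Variables L P Q : finType.

Lemma sum_triple (F : P * Q * L -> int) :
  \sum_c F c = \sum_l \sum_p \sum_q F (p, q, l).
Proof.
rewrite [LHS](eq_bigr (fun c => F (c.1.1, c.1.2, c.2))); last by case=> [[]].
rewrite -(pair_big xpredT xpredT (fun pq l => F (pq.1, pq.2, l))) /= exchange_big.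
by apply: eq_bigr => l _; rewrite -(pair_big xpredT xpredT (fun p q => F (p, q, l))).
Qed.

Lemma sum_kron3 (a1 a2 a3 : L -> int) (F1 F2 F3 : P -> Q -> int) :
  \sum_l \sum_p \sum_q (a1 l * F1 p q + a2 l * F2 p q + a3 l * F3 p q) =
  (\sum_l a1 l) * (\sum_p \sum_q F1 p q) + (\sum_l a2 l) * (\sum_p \sum_q F2 p q)
  + (\sum_l a3 l) * (\sum_p \sum_q F3 p q).
Proof.
under eq_bigr do under eq_bigr do rewrite !big_split /= -!mulr_sumr.
under eq_bigr do rewrite !big_split /= -!mulr_sumr.
by rewrite !big_split /= -!mulr_suml.
Qed.

Lemma sum_kron3_mul (a1 a2 a3 b1 b2 b3 : L -> int)
    (F1 F2 F3 H1 H2 H3 : P -> Q -> int) :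
  \sum_l \sum_p \sum_q ((a1 l * F1 p q + a2 l * F2 p q + a3 l * F3 p q) *
                        (b1 l * H1 p q + b2 l * H2 p q + b3 l * H3 p q)) =
  (\sum_l a1 l * b1 l) * (\sum_p \sum_q F1 p q * H1 p q) +
  (\sum_l a1 l * b2 l) * (\sum_p \sum_q F1 p q * H2 p q) +
  (\sum_l a1 l * b3 l) * (\sum_p \sum_q F1 p q * H3 p q) +
  (\sum_l a2 l * b1 l) * (\sum_p \sum_q F2 p q * H1 p q) +
  (\sum_l a2 l * b2 l) * (\sum_p \sum_q F2 p q * H2 p q) +
  (\sum_l a2 l * b3 l) * (\sum_p \sum_q F2 p q * H3 p q) +
  (\sum_l a3 l * b1 l) * (\sum_p \sum_q F3 p q * H1 p q) +
  (\sum_l a3 l * b2 l) * (\sum_p \sum_q F3 p q * H2 p q) +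
  (\sum_l a3 l * b3 l) * (\sum_p \sum_q F3 p q * H3 p q).
Proof.
have expand l p q :
  (a1 l * F1 p q + a2 l * F2 p q + a3 l * F3 p q) *
  (b1 l * H1 p q + b2 l * H2 p q + b3 l * H3 p q) =
  a1 l * b1 l * (F1 p q * H1 p q) + a1 l * b2 l * (F1 p q * H2 p q) +
  a1 l * b3 l * (F1 p q * H3 p q) + a2 l * b1 l * (F2 p q * H1 p q) +
  a2 l * b2 l * (F2 p q * H2 p q) + a2 l * b3 l * (F2 p q * H3 p q) +
  a3 l * b1 l * (F3 p q * H1 p q) + a3 l * b2 l * (F3 p q * H2 p q) +
  a3 l * b3 l * (F3 p q * H3 p q) by ring.
under eq_bigr do under eq_bigr do under eq_bigr do rewrite expand.
under eq_bigr do under eq_bigr do rewrite !big_split /= -!mulr_sumr.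
under eq_bigr do rewrite !big_split /= -!mulr_sumr.
by rewrite !big_split /= -!mulr_suml.
Qed.

End KroneckerSums.

Section AdjacencyMatrix.
Local Open Scope ring_scope.
Variables (T : finType) (e : rel T).

Lemma sum_enum_val (F : T -> int) : \sum_(k < #|T|) F (enum_val k) = \sum_x F x.
Proof. by rewrite -big_enum_val; apply: eq_bigl => x; rewrite inE. Qed.

Lemma adjmx_mulJ k : (forall a, #|[pred b | e a b]| = k) ->
  adjmx e *m Jmx #|T| = k%:R *: Jmx #|T|.
Proof.
move=> outdeg; apply/matrixP => i j; rewrite !mxE.
under eq_bigr => l _ do rewrite !mxE mulr1.
by rewrite mulr1 -(outdeg (enum_val i)) -sumr_nat_card -sum_enum_val.
Qed.

Lemma Jmx_muladj k : (forall b, #|[pred a | e a b]| = k) ->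
  Jmx #|T| *m adjmx e = k%:R *: Jmx #|T|.
Proof.
move=> indeg; apply/matrixP => i j; rewrite !mxE.
under eq_bigr => l _ do rewrite !mxE mul1r.
by rewrite mulr1 -(indeg (enum_val j)) -sumr_nat_card -sum_enum_val.
Qed.

Lemma adjmx_sqrE i j : (adjmx e *m adjmx e) i j =
  #|[pred c | e (enum_val i) c && e c (enum_val j)]|%:R.
Proof.
rewrite mxE; under eq_bigr => l _ do rewrite !mxE -natrM mulnb.
by rewrite -sumr_nat_card -sum_enum_val.
Qed.

Lemma is_dsrg_from_counts v k t lam mu :
  irreflexive e -> #|T| = v ->
  (forall a, #|[pred b | e a b]| = k) -> (forall b, #|[pred a | e a b]| = k) ->
  (forall a b, #|[pred c | e a c && e c b]| =
     if a == b then t else if e a b then lam else mu) ->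
  is_dsrg e v k t lam mu.
Proof.
move=> irr cardT outdeg indeg paths; split=> //.
- exact: adjmx_mulJ.
- exact: Jmx_muladj.
apply/matrixP => i j; rewrite adjmx_sqrE paths !mxE (inj_eq enum_val_inj).
case: eqVneq => [->|_]; first by rewrite irr /= mulr1n; ring.
by case: (e _ _); rewrite /= mulr0n; ring.
Qed.

End AdjacencyMatrix.

Lemma eq_is_dsrg (T : finType) (e1 e2 : rel T) v k t lam mu :
  e1 =2 e2 -> is_dsrg e1 v k t lam mu -> is_dsrg e2 v k t lam mu.
Proof.
move=> E; have eqA : adjmx e1 = adjmx e2 by apply/matrixP => i j; rewrite !mxE E.
by rewrite /is_dsrg -eqA => -[irr *]; split=> // x; rewrite -E.
Qed.

Definition tournament (T : eqType) (t : rel T) :=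
  forall i j, t i j + t j i = (i != j) :> nat.

Section Tournament.
Local Open Scope ring_scope.
Variables (T : finType) (t : rel T).
Hypothesis tourn : tournament t.

Lemma tournament_irr : irreflexive t.
Proof. by move=> i; have := tourn i i; rewrite eqxx; case: (t i i). Qed.

Lemma tournament_arcs i j : (t i j)%:R + (t j i)%:R = 1 - (i == j)%:R :> int.
Proof. by rewrite -natrD tourn; case: eqP. Qed.

Lemma sum_tournament_arcs i :
  \sum_l ((t i l)%:R + (t l i)%:R) = #|T|%:R - 1 :> int.
Proof.
under eq_bigr do rewrite tournament_arcs.
by rewrite sumrB sum_delta sumr_constE mulr1.
Qed.

Lemma sum_tournament_arcs_mul i j :
  \sum_l ((t i l)%:R + (t l i)%:R) * ((t l j)%:R + (t j l)%:R)
    = #|T|%:R - 2 + (i == j)%:R :> int.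
Proof.
under eq_bigr => l _ do
  rewrite !tournament_arcs mulrBl mul1r mulrBr mulr1 (eq_sym l j).
by rewrite !sumrB sum_delta_mull !sum_delta sumr_constE (eq_sym j i); ring.
Qed.

End Tournament.

Lemma modn_double x m : x < m.*2 -> x %% m = if x < m then x else x - m.
Proof.
case: ifPn => [/modn_small //|]; rewrite -leqNgt => le_mx lt_x2m.
by rewrite -[in LHS](subnK le_mx) modnDr modn_small; lia.
Qed.

Lemma fwdE m (i j : 'I_m) : fwd i j = (0 < (j + m - i) %% m <= (m - 1) %/ 2).
Proof.
have [lt_im lt_jm] := (ltn_ord i, ltn_ord j).
have dist_mod k : k < m -> (k + m - i) %% m = if i <= k then k - i else k + m - i.
  move=> lt_km; rewrite modn_double; last by lia.
  by case: ifP; case: ifP; lia.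
rewrite /fwd -[val i]/(nat_of_ord i) -[val j]/(nat_of_ord j).
apply/existsP/idP => [[d /andP[/andP[d_gt0 d_le] /eqP ->]]|dist_fwd].
  have lt_dm := ltn_ord d.
  rewrite dist_mod ?ltn_pmod ?modn_double; try lia.
  by case: ifP; case: ifP; lia.
have m_gt0 : 0 < m by lia.
exists (Ordinal (ltn_pmod (j + m - i) m_gt0)); rewrite dist_fwd /=; apply/eqP.
rewrite dist_mod // modn_double; last by case: ifP; lia.
by case: ifP; case: ifP; lia.
Qed.

Lemma fwd_tournament m : odd m -> tournament (@fwd m).
Proof.
move=> m_odd i j; have [lt_im lt_jm] := (ltn_ord i, ltn_ord j).
have m_mod2 : m %% 2 = 1 by rewrite modn2 m_odd.
rewrite !fwdE -(inj_eq val_inj) /= !modn_double; try lia.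
by case: ifP; case: ifP; case: eqVneq => /=; lia.
Qed.

Definition rook (A : eqType) : rel (A * A) :=
  fun v w => (v.1 == w.1) (+) (v.2 == w.2).

Section Rook.
Local Open Scope ring_scope.
Variable A : finType.
Local Notation n := (#|A|%:R : int).

Lemma rook_sym : symmetric (@rook A).
Proof. by move=> v w; rewrite /rook !(eq_sym v.1) (eq_sym v.2). Qed.

Lemma sum_rook x y (h : A -> A -> int) :
  \sum_p \sum_q (rook (x, y) (p, q))%:R * h p q
    = \sum_q h x q + \sum_p h p y - 2 * h x y.
Proof.
have rookE p q : (rook (x, y) (p, q))%:R * h p q =
    (x == p)%:R * h p q + (y == q)%:R * h p q
    - 2 * ((x == p)%:R * ((y == q)%:R * h p q)).
  by rewrite /rook /=; case: (x == p); case: (y == q); rewrite /=; ring.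
under eq_bigr do under eq_bigr do rewrite rookE.
under eq_bigr do rewrite sumrB big_split /= -!mulr_sumr sum_delta_mull.
by rewrite sumrB big_split /= sum_delta_mull -mulr_sumr sum_delta_mull.
Qed.

Lemma rook_deg (x y : A) : \sum_p \sum_q (rook (x, y) (p, q))%:R = 2 * n - 2.
Proof.
transitivity (\sum_p \sum_q (rook (x, y) (p, q))%:R * (fun _ _ => 1 : int) p q).
  by apply: eq_bigr => p _; apply: eq_bigr => q _; rewrite mulr1.
by rewrite sum_rook !sumr_constE; ring.
Qed.

Lemma sum_addb_eq (b : bool) (v : A) :
  \sum_q (b (+) (q == v))%:R = if b then n - 1 else 1.
Proof.
under eq_bigr do rewrite eq_sym.
case: b; last by rewrite sum_delta.
transitivity (\sum_q (1 - (v == q)%:R : int)).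
  by apply: eq_bigr => q _; case: eqP.
by rewrite sumrB sumr_constE sum_delta; ring.
Qed.

Lemma rook_paths (x y u v : A) :
  \sum_p \sum_q (rook (x, y) (p, q))%:R * (rook (p, q) (u, v))%:R =
  (2 * n - 2) * ((x, y) == (u, v))%:R + (n - 2) * (rook (x, y) (u, v))%:R
  + 2 * (1 - ((x, y) == (u, v))%:R - (rook (x, y) (u, v))%:R).
Proof.
rewrite sum_rook /rook /=.
rewrite [X in _ + X - _](eq_bigr (fun p => ((y == v) (+) (p == u))%:R)).
  2: by move=> p _; rewrite addbC.
rewrite !sum_addb_eq xpair_eqE.
by case: (x == u); case: (y == v); rewrite /=; ring.
Qed.

End Rook.

Section CosetSums.
Local Open Scope ring_scope.
Variables (G : finGroupType) (D : {set G}).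
Local Notation n := (#|G|%:R : int).
Local Notation d := (#|D|%:R : int).

Lemma sum_mem_lcoset (z : G) : \sum_p (p \in (z *: D)%g)%:R = d.
Proof. by rewrite sumr_nat_card card_lcoset. Qed.

Lemma sum_lcoset_mem (s : G) : \sum_c (s \in (c *: D)%g)%:R = d.
Proof.
have mem_sym c : (s \in (c *: D)%g) = (c \in (s *: D^-1)%g).
  by rewrite !mem_lcoset mem_invg invMg invgK.
by under eq_bigr do rewrite mem_sym; rewrite sumr_nat_card card_lcoset card_invg.
Qed.

Lemma sum_lcoset_mem_mull (p s : G) : \sum_q (s \in ((p * q) *: D)%g)%:R = d.
Proof.
rewrite (reindex_inj (mulgI p^-1)%g) /=.
by under eq_bigr do rewrite mulKVg; rewrite sum_lcoset_mem.
Qed.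

Lemma sum_lcoset_mem_mulr (q s : G) : \sum_p (s \in ((p * q) *: D)%g)%:R = d.
Proof.
rewrite (reindex_inj (mulIg q^-1)%g) /=.
by under eq_bigr do rewrite mulgKV; rewrite sum_lcoset_mem.
Qed.

Lemma sum2_mem_lcoset_fst (z : G) :
  \sum_p \sum_(q : G) (p \in (z *: D)%g)%:R = n * d.
Proof.
by under eq_bigr do rewrite sumr_constE; rewrite -mulr_sumr sum_mem_lcoset.
Qed.

Lemma sum2_mem_lcoset_snd (z : G) :
  \sum_(p : G) \sum_q (q \in (z *: D)%g)%:R = n * d.
Proof. by under eq_bigr do rewrite sum_mem_lcoset; rewrite sumr_constE. Qed.

Lemma sum2_lcoset_mem (s : G) :
  \sum_p \sum_q (s \in ((p * q) *: D)%g)%:R = n * d.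
Proof. by under eq_bigr do rewrite sum_lcoset_mem_mull; rewrite sumr_constE. Qed.

Lemma sum2_rook_lcoset_mem (x y s : G) :
  \sum_p \sum_q (rook (x, y) (p, q))%:R * (s \in ((p * q) *: D)%g)%:R
    = 2 * d - 2 * (s \in ((x * y) *: D)%g)%:R.
Proof. by rewrite sum_rook sum_lcoset_mem_mull sum_lcoset_mem_mulr; ring. Qed.

Lemma sum2_mem_lcoset_fst_rook (z u v : G) :
  \sum_p \sum_q (p \in (z *: D)%g)%:R * (rook (p, q) (u, v))%:R
    = (n - 2) * (u \in (z *: D)%g)%:R + d.
Proof.
under eq_bigr do under eq_bigr do rewrite mulrC rook_sym.
by rewrite sum_rook sumr_constE sum_mem_lcoset; ring.
Qed.

Lemma sum2_mem_lcoset_snd_rook (z u v : G) :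
  \sum_p \sum_q (q \in (z *: D)%g)%:R * (rook (p, q) (u, v))%:R
    = (n - 2) * (v \in (z *: D)%g)%:R + d.
Proof.
under eq_bigr do under eq_bigr do rewrite mulrC rook_sym.
by rewrite sum_rook sumr_constE sum_mem_lcoset; ring.
Qed.

Lemma sum2_mem_lcoset_fst_lcoset_mem (z s : G) :
  \sum_p \sum_q (p \in (z *: D)%g)%:R * (s \in ((p * q) *: D)%g)%:R = d * d.
Proof.
under eq_bigr do rewrite -mulr_sumr sum_lcoset_mem_mull.
by rewrite -mulr_suml sum_mem_lcoset.
Qed.

Lemma sum2_mem_lcoset_snd_lcoset_mem (z s : G) :
  \sum_p \sum_q (q \in (z *: D)%g)%:R * (s \in ((p * q) *: D)%g)%:R = d * d.
Proof.
rewrite exchange_big /=.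
under eq_bigr do rewrite -mulr_sumr sum_lcoset_mem_mulr.
by rewrite -mulr_suml sum_mem_lcoset.
Qed.

End CosetSums.

(* For D = {1, g} and t = fwd this is Gamma: arcs (1)-(2) are the rook part,
   (3)+(5) and (4)+(6) the two coset parts. *)
Definition coset_digraph (G : finGroupType) (D : {set G}) (L : finType)
    (t : rel L) : rel (G * G * L) :=
  fun a b =>
    let: (x, y, i) := a in
    let: (u, v, j) := b in
    [|| (i == j) && rook (x, y) (u, v),
        t i j && (u \in (x * y) *: D)%g
      | t j i && (v \in (x * y) *: D)%g].

Section CosetDigraph.
Local Open Scope ring_scope.
Variables (G : finGroupType) (D : {set G}) (L : finType) (t : rel L).
Hypotheses (cardD : #|D| = 2%N) (tourn : tournament t).
Local Notation E := (coset_digraph D t).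
Local Notation n := (#|G|%:R : int).
Local Notation ell := (#|L|%:R : int).

Let card_ge2 : (2 <= #|G|)%N.
Proof. by rewrite -cardD max_card. Qed.

Lemma coset_digraph_irr : irreflexive E.
Proof. by case=> [[x y] i]; rewrite /= /rook !eqxx (tournament_irr tourn). Qed.

Lemma coset_digraph_arcE x y i p q l :
  (E (x, y, i) (p, q, l))%:R =
    (i == l)%:R * (rook (x, y) (p, q))%:R
    + (t i l)%:R * (p \in ((x * y) *: D)%g)%:R
    + (t l i)%:R * (q \in ((x * y) *: D)%g)%:R :> int.
Proof.
rewrite /=; case: (eqVneq i l) => [<-|ne_il].
  by rewrite (tournament_irr tourn) //= !mul0r !addr0 mul1r orbF.
have := tourn i l; rewrite ne_il mul0r add0r.
by case: (t i l); case: (t l i) => //= _; rewrite ?orbF mul1r mul0r ?addr0 ?add0r.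
Qed.

Lemma coset_digraph_outdeg a : #|[pred b | E a b]| = (2 * #|L| * #|G| - 2)%N.
Proof.
case: a => [[x y] i]; have ell_gt0 : (0 < #|L|)%N by apply/card_gt0P; exists i.
apply/eqP; rewrite -(eqr_nat int) -sumr_nat_card sum_triple.
under eq_bigr do under eq_bigr do under eq_bigr do rewrite /= coset_digraph_arcE.
rewrite sum_kron3 rook_deg sum2_mem_lcoset_fst sum2_mem_lcoset_snd sum_delta cardD.
rewrite -addrA -mulrDl -big_split /= sum_tournament_arcs // natrB ?natrM.
  by apply/eqP; ring.
by rewrite -mulnA leq_pmulr // muln_gt0 ell_gt0 ltnW.
Qed.

Lemma coset_digraph_indeg b : #|[pred a | E a b]| = (2 * #|L| * #|G| - 2)%N.
Proof.
case: b => [[u v] j]; have ell_gt0 : (0 < #|L|)%N by apply/card_gt0P; exists j.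
apply/eqP; rewrite -(eqr_nat int) -sumr_nat_card sum_triple.
under eq_bigr do under eq_bigr do under eq_bigr do
  rewrite /= coset_digraph_arcE rook_sym (eq_sym _ j).
rewrite sum_kron3 rook_deg !sum2_lcoset_mem sum_delta cardD.
rewrite -addrA -mulrDl -big_split /=; under eq_bigr do rewrite addrC.
rewrite sum_tournament_arcs // natrB ?natrM.
  by apply/eqP; ring.
by rewrite -mulnA leq_pmulr // muln_gt0 ell_gt0 ltnW.
Qed.

Lemma coset_digraph_pathsE a b :
  #|[pred c | E a c && E c b]|%:R =
    4 * ell - 2 + (2 * n - 4) * (a == b)%:R + (n - 4) * (E a b)%:R :> int.
Proof.
case: a b => [[x y] i] [[u v] j].
rewrite -sumr_nat_card sum_triple.
under eq_bigr do under eq_bigr do under eq_bigr do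
  rewrite /= -mulnb natrM !coset_digraph_arcE.
rewrite sum_kron3_mul rook_paths !sum2_rook_lcoset_mem.
rewrite sum2_mem_lcoset_fst_rook sum2_mem_lcoset_snd_rook.
rewrite !sum2_mem_lcoset_fst_lcoset_mem !sum2_mem_lcoset_snd_lcoset_mem cardD.
rewrite !sum_delta_mull !sum_delta_mulr.
have arcs2 : \sum_l (t i l)%:R * (t l j)%:R + \sum_l (t i l)%:R * (t j l)%:R
    + \sum_l (t l i)%:R * (t l j)%:R + \sum_l (t l i)%:R * (t j l)%:R
    = ell - 2 + (i == j)%:R :> int.
  rewrite -(sum_tournament_arcs_mul tourn) -!big_split /=.
  by apply: eq_bigr => l _; ring.
rewrite coset_digraph_arcE !xpair_eqE /rook /=.
case: (eqVneq i j) arcs2 => [<-|ne_ij] /= arcs2.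
  rewrite (tournament_irr tourn) /=.
  by case: (x == u); case: (y == v); rewrite /=; lia.
have := tourn i j; rewrite ne_ij => arc.
by case: (t i j) arc; case: (t j i) => //= _; lia.
Qed.

Theorem coset_digraph_dsrg :
  is_dsrg E (#|L| * #|G| ^ 2) (2 * #|L| * #|G| - 2) (2 * #|G| + 4 * #|L| - 6)
    (#|G| + 4 * #|L| - 6) (4 * #|L| - 2).
Proof.
apply: is_dsrg_from_counts.
- exact: coset_digraph_irr.
- by rewrite !card_prod -mulnn mulnC.
- exact: coset_digraph_outdeg.
- exact: coset_digraph_indeg.
move=> [[x y] i] b; have ell_gt0 : (0 < #|L|)%N by apply/card_gt0P; exists i.
apply/eqP; rewrite -(eqr_nat int) coset_digraph_pathsE.
case: (eqVneq (x, y, i) b) => [<-|_]; [rewrite coset_digraph_irr | case: (E _ b)];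
  rewrite /= natrB ?natrD ?natrM; try by apply/eqP; ring.
(* [#|G|] occurs in convertible but syntactically different forms here, which
   lia would read as distinct atoms. *)
all: set nG := #|G|; set nL := #|L|.
all: have : (1 < nG)%N := card_ge2; have : (0 < nL)%N := ell_gt0; lia.
Qed.

End CosetDigraph.

Lemma Gamma_coset_digraph (G : finGroupType) (g : G) m :
  Gamma g m =2 coset_digraph [set 1; g]%g (@fwd m).
Proof.
have mulVg_eq (z w : G) : ((z^-1 * w == g) = (w == z * g))%g.
  by apply/eqP/eqP => [<-|->]; rewrite ?mulKVg ?mulKg.
case=> [[x y] i] [[u v] j].
rewrite /Gamma /coset_digraph /rook !mem_lcoset !in_set2 -!eq_mulVg1 !mulVg_eq /=.
rewrite !(eq_sym (x * y)%g).
by case: (i == j); case: (fwd i j); case: (fwd j i); case: (x == u); case: (y == v);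
  case: (u == _); case: (u == _); case: (v == _); case: (v == _).
Qed.

Theorem mainTheorem2 (G : finGroupType) (g : G) (m : nat) :
  2 <= #|G| -> g != 1%g -> 3 <= m -> odd m ->
  is_dsrg (Gamma g m)
    (m * #|G| ^ 2) (2 * m * #|G| - 2) (2 * #|G| + 4 * m - 6)
    (#|G| + 4 * m - 6) (4 * m - 2).
Proof.
move=> _ g_neq1 _ m_odd.
have cardD : #|[set 1; g]%g| = 2 by rewrite cards2 eq_sym g_neq1.
have := coset_digraph_dsrg cardD (fwd_tournament m_odd); rewrite card_ord.
by apply: eq_is_dsrg => a b; rewrite Gamma_coset_digraph.
Qed.
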